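(* There exists a constant $C>0$ such that for all integers $n\ge2$, $g\ge1$ with $\theta:=g/n\ge x^{-2/3}$, where $x:=n+g$, \[\Big|\alpha(n,g)-4\lambda(\theta)-\frac{4\lambda(\theta)}{n}\Big(\frac12-\theta+\frac{\theta^2}{2}f''(\theta)+\theta j'(\theta)\Big)\Big|\le \frac{C}{x^2}.\]
   Context: Define $\lambda:[0,\infty)\to(0,1/4]$ by $\lambda(0)=1/4$ and, for $\theta>0$, $\lambda(\theta)$ is the unique $\lambda\in(0,1/4)$ with $-1+\frac{\operatorname{artanh}(\sqrt{1-4\lambda})}{\sqrt{1-4\lambda}}=\theta$. For $\theta>0$ set $f(\theta)=-\ln\lambda(\theta)-2\theta-\theta\ln(1-4\lambda(\theta))$ and $j(\theta)=-\tfrac12\ln(1-4(\theta+1)\lambda(\theta))+\tfrac12\ln 2$. For integers $n\ge1$, $g\ge1$ let \[\Omega(n,g)=\frac{\sqrt g\,g^g}{\sqrt{2\pi}\,e^g\,g!}\,n^{2g-2}\exp\!\Big(nf\big(\tfrac gn\big)+j\big(\tfrac gn\big)\Big),\] and for $n\ge2$, $g\ge1$ let $\alpha(n,g)=\frac{2(2n-1)}{n+1}\frac{\Omega(n-1,g)}{\Omega(n,g)}$. *)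

From Stdlib Require Import Reals ClassicalEpsilon.
From Coquelicot Require Import Coquelicot.
Open Scope R_scope.

Definition artanh (y : R) : R := / 2 * ln ((1 + y) / (1 - y)).

Definition lam_spec (th l : R) : Prop :=
  (th = 0 /\ l = / 4) \/
  (0 < th /\ 0 < l < / 4 /\
   -1 + artanh (sqrt (1 - 4 * l)) / sqrt (1 - 4 * l) = th).

Definition lam (th : R) : R := epsilon (inhabits 0) (lam_spec th).

Definition fF (th : R) : R :=
  - ln (lam th) - 2 * th - th * ln (1 - 4 * lam th).

Definition jF (th : R) : R :=
  - / 2 * ln (1 - 4 * (th + 1) * lam th) + / 2 * ln 2.

Definition Omega (n g : nat) : R :=
  sqrt (INR g) * INR g ^ g / (sqrt (2 * PI) * exp (INR g) * INR (Stdlib.Arith.Factorial.fact g))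
  * INR n ^ (2 * g - 2)
  * exp (INR n * fF (INR g / INR n) + jF (INR g / INR n)).

Definition alpha (n g : nat) : R :=
  2 * (2 * INR n - 1) / (INR n + 1) * (Omega (n - 1) g / Omega n g).

(* Put θ = u coth u − 1 with u > 0. Then λ(θ) = 1/(4 cosh² u), and since
   dθ/du = (sinh u cosh u − u)/sinh² u, the chain rule turns f′, f″, f‴, j′, j″
   into explicit hyperbolic functions of u. Elementary hyperbolic inequalities
   give θ²|f″| ≤ 2, θ²|f‴| ≤ 10, θ|j′| ≤ 2θ + 4, θ²|j″| ≤ 22(θ + 2), f″ ≤ 0,
   j′ ≤ 0 and λ(1 + θ)⁴ ≤ 16.

   The ratio Ω(n−1,g)/Ω(n,g) is exp Δ with
   Δ = (2g − 2) ln(1 − 1/n) + (n − 1) f(g/(n−1)) + j(g/(n−1)) − n f(θ) − j(θ).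
   Expanding f and j by Taylor at θ with step θ/(n − 1) and using
   θ f′(θ) − f(θ) − 2θ = ln λ gives Δ = ln λ + B/n + O((1 + θ)/n²), where B is
   the bracket of the statement plus 3/2. Exponentiating, the error is
   λ·O((1 + θ)²/n²), and λ(1 + θ)⁴ ≤ 16 turns this into O(1/(n(1 + θ))²) = O(1/x²). *)

From Stdlib Require Import Reals Lra Lia ClassicalEpsilon Ranalysis5.
From Coquelicot Require Import Coquelicot.
Open Scope R_scope.

Ltac positivity :=
  repeat (first [lra | apply Rmult_lt_0_compat | apply Rinv_0_lt_compat | apply pow_lt]).
Ltac pos_neq0 := apply Rgt_not_eq; positivity.

(** * Monotonicity from the sign of the derivative *)

Lemma continuity_pt_of_is_derive f x l : is_derive f x l -> continuity_pt f x.
Proof. intro H. apply derivable_continuous_pt. exists l. now apply is_derive_Reals. Qed.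

Lemma MVT_interval (h dh : R -> R) a b : a < b ->
  (forall x, a <= x <= b -> is_derive h x (dh x)) ->
  exists c, a <= c <= b /\ h b - h a = dh c * (b - a).
Proof.
  intros Hab Hd.
  destruct (MVT_gen h a b dh) as [c [Hc Heq]];
    rewrite ?Rmin_left, ?Rmax_right in * by lra.
  - intros x Hx. apply Hd. lra.
  - intros x Hx. eapply continuity_pt_of_is_derive, Hd. lra.
  - now exists c.
Qed.

Lemma lt_of_is_derive_pos (h dh : R -> R) a b : a < b ->
  (forall x, a <= x <= b -> is_derive h x (dh x)) ->
  (forall x, a <= x <= b -> 0 < dh x) -> h a < h b.
Proof.
  intros Hab Hd Hp. destruct (MVT_interval h dh a b Hab Hd) as [c [Hc E]].
  pose proof (Hp c Hc). nra.
Qed.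

Lemma le_of_is_derive_nonneg (h dh : R -> R) a b : a <= b ->
  (forall x, a <= x <= b -> is_derive h x (dh x)) ->
  (forall x, a <= x <= b -> 0 <= dh x) -> h a <= h b.
Proof.
  intros Hab Hd Hp. destruct (Req_dec a b) as [->|Hne]; [lra|].
  destruct (MVT_interval h dh a b ltac:(lra) Hd) as [c [Hc E]].
  pose proof (Hp c Hc). nra.
Qed.

Lemma pos_of_is_derive_from_0 (h dh : R -> R) u : 0 < u -> h 0 = 0 ->
  (forall x, 0 <= x -> is_derive h x (dh x)) ->
  (forall x, 0 <= x -> 0 <= dh x) -> (forall x, 0 < x -> 0 < dh x) -> 0 < h u.
Proof.
  intros Hu H0 Hd Hnn Hp.
  assert (h 0 <= h (u / 2)).
  { apply (le_of_is_derive_nonneg h dh); intros; try apply Hd; try apply Hnn; lra. }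
  assert (h (u / 2) < h u).
  { apply (lt_of_is_derive_pos h dh); intros; try apply Hd; try apply Hp; lra. }
  lra.
Qed.

Lemma is_derive_inverse_pos (h g dh : R -> R) t : 0 < t ->
  (forall u, 0 < u -> is_derive h u (dh u)) ->
  (forall u, 0 < u -> 0 < dh u) ->
  (forall s, 0 < s -> 0 < g s /\ h (g s) = s) ->
  is_derive g t (/ dh (g t)).
Proof.
  intros Ht Hd Hdpos Hg.
  assert (h_lt : forall a b, 0 < a -> a < b -> h a < h b).
  { intros a b Ha Hab.
    apply (lt_of_is_derive_pos h dh); intros; [lra | apply Hd | apply Hdpos]; lra. }
  assert (g_le : forall a b, 0 < a -> a <= b -> g a <= g b).
  { intros a b Ha Hab. destruct (Hg a Ha) as [Ga Ea], (Hg b ltac:(lra)) as [Gb Eb].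
    destruct (Rle_dec (g a) (g b)) as [|Hlt]; auto.
    pose proof (h_lt (g b) (g a) Gb ltac:(lra)). lra. }
  destruct (Hg (t / 2) ltac:(lra)) as [Glb Elb], (Hg (2 * t) ltac:(lra)) as [Gub Eub].
  assert (Hinv : forall x, t / 2 <= x -> comp h g x = id x)
    by (intros x Hx; unfold comp, id; apply Hg; lra).
  assert (Hgt : g (t / 2) <= g t <= g (2 * t)) by (split; apply g_le; lra).
  assert (Prf : forall a, g (t / 2) <= a <= g (2 * t) -> derivable_pt h a).
  { intros a Ha. exists (dh a). apply is_derive_Reals, Hd. lra. }
  assert (Hcont : continuity_pt g t).
  { apply (continuity_pt_recip_interv h g (g (t / 2)) (g (2 * t))).
    - destruct (g_le (t / 2) (2 * t)) as [|E]; [lra | lra | auto |].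
      rewrite E in Elb. lra.
    - intros a b Ha Hab Hb. apply h_lt; lra.
    - intros x Hx _. apply Hinv. lra.
    - intros x Hx Hy. split; apply g_le; lra.
    - intros a Ha. eapply continuity_pt_of_is_derive, Hd. lra.
    - lra. }
  pose proof (derivable_pt_lim_recip_interv h g (t / 2) (2 * t) t Prf Hcont
                ltac:(lra) ltac:(lra) Hgt ltac:(intros x Hx; apply Hinv; lra)) as Hlim.
  assert (Hder : derive_pt h (g t) (Prf (g t) Hgt) = dh (g t)).
  { apply derive_pt_eq_0, is_derive_Reals, Hd. lra. }
  rewrite Hder in Hlim. unfold Rdiv in Hlim. rewrite Rmult_1_l in Hlim.
  apply is_derive_Reals, Hlim. apply Rgt_not_eq, Hdpos. lra.
Qed.

(** * Elementary inequalities *)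

Lemma ln_one_sub_le y : 0 <= y < 1 -> ln (1 - y) <= - y - y ^ 2 / 2.
Proof.
  intro Hy. set (h := fun x => - x - x ^ 2 / 2 - ln (1 - x)).
  assert (H : h 0 <= h y).
  { apply (le_of_is_derive_nonneg h (fun x => x ^ 2 / (1 - x))); [lra | |].
    - intros x Hx. unfold h. auto_derive; [lra | field; lra].
    - intros x Hx. apply Rmult_le_pos; [apply pow2_ge_0 | apply Rlt_le, Rinv_0_lt_compat; lra]. }
  unfold h in H. rewrite Rminus_0_r, ln_1 in H. lra.
Qed.

Lemma ln_one_sub_ge y : 0 <= y <= 2 / 3 -> - y - y ^ 2 / 2 - y ^ 3 <= ln (1 - y).
Proof.
  intro Hy. set (h := fun x => ln (1 - x) + x + x ^ 2 / 2 + x ^ 3).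
  assert (H : h 0 <= h y).
  { apply (le_of_is_derive_nonneg h (fun x => x ^ 2 * (2 - 3 * x) / (1 - x))); [lra | |].
    - intros x Hx. unfold h. auto_derive; [lra | field; lra].
    - intros x Hx. apply Rmult_le_pos; [apply Rmult_le_pos; [apply pow2_ge_0 | lra] |].
      apply Rlt_le, Rinv_0_lt_compat. lra. }
  unfold h in H. rewrite Rminus_0_r, ln_1 in H. lra.
Qed.

Lemma ln_sub_1_div_bounds N : 2 <= N ->
  - / N - (/ N) ^ 2 / 2 - (/ N) ^ 3 <= ln ((N - 1) / N) <= - / N - (/ N) ^ 2 / 2.
Proof.
  intro HN. replace ((N - 1) / N) with (1 - / N) by (field; lra).
  assert (0 < / N <= 1 / 2).
  { split; [positivity|]. apply (Rmult_le_reg_r N); [lra|]. rewrite Rinv_l by lra. lra. }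
  split; [apply ln_one_sub_ge | apply ln_one_sub_le]; lra.
Qed.

Lemma Rabs_triang4 a b c d : Rabs (a + b + c + d) <= Rabs a + Rabs b + Rabs c + Rabs d.
Proof.
  pose proof (Rabs_triang (a + b + c) d). pose proof (Rabs_triang (a + b) c).
  pose proof (Rabs_triang a b). lra.
Qed.

Lemma exp_sub_1_sub_le z : z <= 2 -> Rabs (exp z - 1 - z) <= 5 * z ^ 2.
Proof.
  intro Hz. pose proof (exp_ineq1_le z). rewrite Rabs_pos_eq by lra.
  assert (exp_le_9 : forall x, x <= 2 -> exp x <= 9).
  { intros x Hx. pose proof exp_le_3. pose proof (exp_pos 1).
    assert (exp x <= exp (1 + 1))
      by (destruct Hx as [Hx | ->]; [apply Rlt_le, exp_increasing; lra | right; f_equal; ring]).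
    rewrite exp_plus in *. nra. }
  set (h := fun x => 5 * x ^ 2 - (exp x - 1 - x)).
  set (dh := fun x => 10 * x - exp x + 1).
  assert (Dh : forall x, is_derive h x (dh x))
    by (intro x; unfold h, dh; auto_derive; auto; ring).
  assert (Ddh : forall x, is_derive dh x (10 - exp x))
    by (intro x; unfold dh; auto_derive; auto; ring).
  assert (h0 : h 0 = 0) by (unfold h; rewrite exp_0; ring).
  assert (dh0 : dh 0 = 0) by (unfold dh; rewrite exp_0; ring).
  enough (0 <= h z) by (unfold h in *; lra).
  clearbody h dh.
  assert (dh_le : forall a b, a <= b <= 2 -> dh a <= dh b).
  { intros a b Hab. apply (le_of_is_derive_nonneg dh (fun x => 10 - exp x)); [lra | auto |].
    intros x Hx. pose proof (exp_le_9 x ltac:(lra)). lra. }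
  destruct (Rle_dec 0 z) as [Hp|Hn].
  - rewrite <- h0. apply (le_of_is_derive_nonneg h dh); auto.
    intros x Hx. rewrite <- dh0. apply dh_le. lra.
  - rewrite <- h0. apply Ropp_le_cancel.
    apply (le_of_is_derive_nonneg (fun x => - h x) (fun x => - dh x) z 0); [lra| |].
    + intros x Hx. now apply (is_derive_opp h).
    + intros x Hx. rewrite <- Ropp_0. apply Ropp_le_contravar.
      rewrite <- dh0. apply dh_le. lra.
Qed.

Lemma one_add_pow4_mul_exp_le u : 0 <= u -> (1 + u) ^ 4 * exp (- (2 * u)) <= 16.
Proof.
  intro Hu. pose proof (exp_ineq1_le (u / 2)).
  assert (E : exp (2 * u) = exp (u / 2) ^ 4).
  { simpl. rewrite Rmult_1_r, <- !exp_plus. f_equal. field. }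
  assert ((1 + u / 2) ^ 4 <= exp (2 * u)) by (rewrite E; apply pow_incr; lra).
  assert ((1 + u) ^ 4 <= 16 * (1 + u / 2) ^ 4).
  { replace (16 * (1 + u / 2) ^ 4) with ((2 + u) ^ 4) by (simpl; field). apply pow_incr. lra. }
  rewrite exp_Ropp. pose proof (exp_pos (2 * u)).
  apply Rle_div_l; [lra | nra].
Qed.

(** * Hyperbolic functions *)

Lemma cosh_sqr_sub_sinh_sqr x : cosh x ^ 2 - sinh x ^ 2 = 1.
Proof.
  unfold cosh, sinh. rewrite exp_Ropp.
  assert (exp x <> 0) by apply Rgt_not_eq, exp_pos. field; auto.
Qed.

Lemma cosh_add_sinh x : cosh x + sinh x = exp x.
Proof. unfold cosh, sinh. field. Qed.

Lemma cosh_sub_sinh x : cosh x - sinh x = exp (- x).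
Proof. unfold cosh, sinh. field. Qed.

Lemma sinh_pow_SS x k : sinh x ^ S (S k) = (cosh x ^ 2 - 1) * sinh x ^ k.
Proof.
  pose proof (cosh_sqr_sub_sinh_sqr x). cbn [pow].
  replace (cosh x * (cosh x * 1) - 1) with (sinh x * (sinh x * 1)) by lra. ring.
Qed.

(* Closes polynomial identities in sinh u and cosh u that only hold modulo
   cosh² u − sinh² u = 1, by rewriting every power sinh u ^ (k + 2). *)
Ltac hyp_ring u := ring_simplify; rewrite ?(sinh_pow_SS u); ring.

Lemma is_derive_sinh x : is_derive sinh x (cosh x).
Proof. unfold sinh, cosh. auto_derive; auto. field. Qed.

Lemma is_derive_cosh x : is_derive cosh x (sinh x).
Proof. unfold sinh, cosh. auto_derive; auto. field. Qed.

Lemma ex_derive_sinh x : ex_derive sinh x.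
Proof. eexists; apply is_derive_sinh. Qed.

Lemma ex_derive_cosh x : ex_derive cosh x.
Proof. eexists; apply is_derive_cosh. Qed.

#[local] Hint Resolve ex_derive_sinh ex_derive_cosh : core.

Lemma cosh_gt_1 x : x <> 0 -> 1 < cosh x.
Proof.
  intro Hx. unfold cosh.
  pose proof (exp_ineq1 x Hx). pose proof (exp_ineq1 (- x) ltac:(lra)). lra.
Qed.

Lemma cosh_ge_1 x : 1 <= cosh x.
Proof.
  destruct (Req_dec x 0) as [->|Hx].
  - rewrite cosh_0. lra.
  - left; now apply cosh_gt_1.
Qed.

Lemma sinh_pos x : 0 < x -> 0 < sinh x.
Proof. intro Hx. rewrite <- sinh_0. now apply sinh_lt. Qed.

Lemma sinh_lt_cosh x : sinh x < cosh x.
Proof. pose proof (cosh_sub_sinh x). pose proof (exp_pos (- x)). lra. Qed.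

Lemma sinh_gt_id x : 0 < x -> x < sinh x.
Proof.
  intro Hx. enough (0 < sinh x - x) by lra.
  apply (pos_of_is_derive_from_0 (fun y => sinh y - y) (fun y => cosh y - 1) x Hx).
  - rewrite sinh_0. lra.
  - intros. auto_derive; auto. now rewrite Rmult_1_l.
  - intros. pose proof (cosh_ge_1 x0). lra.
  - intros. pose proof (cosh_gt_1 x0). lra.
Qed.

Lemma sinh_lt_id_mul_cosh u : 0 < u -> sinh u < u * cosh u.
Proof.
  intro Hu. enough (0 < u * cosh u - sinh u) by lra.
  apply (pos_of_is_derive_from_0 (fun y => y * cosh y - sinh y) (fun y => y * sinh y) u Hu).
  - rewrite sinh_0. lra.
  - intros. auto_derive; auto. ring.
  - intros x [Hx|<-]; [pose proof (sinh_pos x Hx); nra | rewrite sinh_0; lra].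
  - intros x Hx. pose proof (sinh_pos x Hx). nra.
Qed.

Lemma id_lt_sinh_mul_cosh u : 0 < u -> u < sinh u * cosh u.
Proof. intro Hu. pose proof (sinh_gt_id u Hu). pose proof (cosh_gt_1 u ltac:(lra)). nra. Qed.

(** * The parametrization θ = u coth u − 1 *)

Definition Dsc (u : R) : R := sinh u * cosh u - u.

Definition theta_of (u : R) : R := u * cosh u / sinh u - 1.

Lemma is_derive_theta_of u : 0 < u -> is_derive theta_of u (Dsc u / sinh u ^ 2).
Proof.
  intro Hu. pose proof (sinh_pos u Hu). unfold theta_of, Dsc.
  auto_derive.
  - repeat split; auto. lra.
  - pose proof (cosh_sqr_sub_sinh_sqr u). field_simplify_eq; [nra|lra].
Qed.

Lemma Dsc_pos u : 0 < u -> 0 < Dsc u.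
Proof. intro Hu. pose proof (id_lt_sinh_mul_cosh u Hu). unfold Dsc. lra. Qed.

Lemma theta_of_eq u : 0 < u -> theta_of u = (u * cosh u - sinh u) / sinh u.
Proof. intro Hu. pose proof (sinh_pos u Hu). unfold theta_of. field. lra. Qed.

Lemma theta_of_pos u : 0 < u -> 0 < theta_of u.
Proof.
  intro Hu. rewrite theta_of_eq by auto.
  pose proof (sinh_lt_id_mul_cosh u Hu). pose proof (sinh_pos u Hu).
  apply Rdiv_lt_0_compat; lra.
Qed.

Lemma theta_of_le_id u : 0 < u -> theta_of u <= u.
Proof.
  intro Hu. rewrite theta_of_eq by auto.
  pose proof (sinh_gt_id u Hu). pose proof (cosh_sub_sinh u).
  assert (exp (- u) <= 1) by (rewrite <- exp_0; apply Rlt_le, exp_increasing; lra).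
  apply Rle_div_l; nra.
Qed.

Lemma theta_of_ge_id_sub_1 u : 0 < u -> u - 1 <= theta_of u.
Proof.
  intro Hu. rewrite theta_of_eq by auto.
  pose proof (sinh_lt_cosh u). pose proof (sinh_pos u Hu).
  apply Rle_div_r; nra.
Qed.

Lemma theta_of_surj t : 0 < t -> exists u, 0 < u /\ theta_of u = t.
Proof.
  intro Ht.
  destruct (IVT_interv (fun u => theta_of u - t) (t / 2) (t + 2)) as [u [Hu Hu0]].
  - intros a Ha. apply continuity_pt_minus; [|apply continuity_pt_const; now intros ?].
    eapply continuity_pt_of_is_derive, is_derive_theta_of. lra.
  - lra.
  - pose proof (theta_of_le_id (t / 2) ltac:(lra)). lra.
  - pose proof (theta_of_ge_id_sub_1 (t + 2) ltac:(lra)). lra.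
  - exists u. split; lra.
Qed.

Lemma artanh_tanh u : artanh (sinh u / cosh u) = u.
Proof.
  unfold artanh. pose proof (sinh_lt_cosh u). pose proof (cosh_ge_1 u).
  replace ((1 + sinh u / cosh u) / (1 - sinh u / cosh u)) with
    ((cosh u + sinh u) / (cosh u - sinh u)) by (field; split; lra).
  rewrite cosh_add_sinh, cosh_sub_sinh. unfold Rdiv. rewrite exp_Ropp, Rinv_inv.
  rewrite <- exp_plus, ln_exp. field.
Qed.

Lemma tanh_artanh y : 0 < y < 1 -> 0 < artanh y /\ sinh (artanh y) / cosh (artanh y) = y.
Proof.
  intro Hy. unfold artanh.
  set (w := (1 + y) / (1 - y)).
  assert (Hw : 1 < w) by (apply Rlt_div_r; lra).
  split.
  - assert (0 < ln w) by (rewrite <- ln_1; apply ln_increasing; lra). lra.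
  - unfold sinh, cosh. rewrite exp_Ropp.
    assert (E : exp (/ 2 * ln w) * exp (/ 2 * ln w) = w).
    { rewrite <- exp_plus. replace (/ 2 * ln w + / 2 * ln w) with (ln w) by field.
      apply exp_ln. lra. }
    pose proof (exp_pos (/ 2 * ln w)).
    set (e := exp (/ 2 * ln w)) in *.
    replace ((e - / e) / 2 / ((e + / e) / 2)) with ((e * e - 1) / (e * e + 1))
      by (field; split; nra).
    rewrite E. unfold w. field. split; lra.
Qed.

Lemma lam_spec_theta_of u : 0 < u -> lam_spec (theta_of u) (/ (4 * cosh u ^ 2)).
Proof.
  intro Hu. right.
  pose proof (cosh_gt_1 u ltac:(lra)). pose proof (sinh_pos u Hu).
  assert (Hsqrt : sqrt (1 - 4 * / (4 * cosh u ^ 2)) = sinh u / cosh u).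
  { pose proof (cosh_sqr_sub_sinh_sqr u).
    replace (1 - 4 * / (4 * cosh u ^ 2)) with ((sinh u / cosh u) ^ 2)
      by (field_simplify_eq; [nra|lra]).
    apply sqrt_pow2, Rlt_le, Rdiv_lt_0_compat; lra. }
  split; [now apply theta_of_pos|]. split.
  - split; [apply Rinv_0_lt_compat; nra|].
    rewrite <- (Rinv_inv 4) at 2. apply Rinv_lt_contravar; nra.
  - rewrite Hsqrt, artanh_tanh. unfold theta_of. field. lra.
Qed.

(* λ = 1/(4 cosh² u) gives sqrt(1 − 4λ) = tanh u. *)
Definition u_of (t : R) : R := artanh (sqrt (1 - 4 * lam t)).

Lemma u_of_spec t : 0 < t ->
  0 < u_of t /\ theta_of (u_of t) = t /\ lam t = / (4 * cosh (u_of t) ^ 2).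
Proof.
  intro Ht.
  assert (Hs : lam_spec t (lam t)).
  { unfold lam. apply epsilon_spec. destruct (theta_of_surj t Ht) as [u [Hu <-]].
    exists (/ (4 * cosh u ^ 2)). now apply lam_spec_theta_of. }
  destruct Hs as [[H0 _]|[_ [[Hl1 Hl2] Heq]]]; [lra|].
  unfold u_of. set (y := sqrt (1 - 4 * lam t)) in *.
  assert (Hy2 : y ^ 2 = 1 - 4 * lam t) by (unfold y; rewrite <- Rsqr_pow2; apply Rsqr_sqrt; lra).
  assert (Hy : 0 < y < 1) by (split; [apply sqrt_lt_R0; lra | nra]).
  destruct (tanh_artanh y Hy) as [Hv Htv].
  set (v := artanh y) in *.
  pose proof (cosh_ge_1 v). pose proof (sinh_pos v Hv). pose proof (cosh_sqr_sub_sinh_sqr v).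
  split; [exact Hv|]. split.
  - unfold theta_of. rewrite <- Heq, <- Htv. field. lra.
  - rewrite <- Htv in Hy2.
    replace (lam t) with ((1 - (sinh v / cosh v) ^ 2) / 4) by lra.
    field_simplify_eq; [nra|lra].
Qed.

Lemma is_derive_u_of t : 0 < t -> is_derive u_of t (sinh (u_of t) ^ 2 / Dsc (u_of t)).
Proof.
  intro Ht.
  destruct (u_of_spec t Ht) as [Hu _].
  pose proof (sinh_pos _ Hu). pose proof (Dsc_pos _ Hu).
  replace (sinh (u_of t) ^ 2 / Dsc (u_of t)) with (/ (Dsc (u_of t) / sinh (u_of t) ^ 2))
    by (field; split; nra).
  apply (is_derive_inverse_pos theta_of u_of (fun u => Dsc u / sinh u ^ 2) t Ht).
  - apply is_derive_theta_of.
  - intros u Hu'. apply Rdiv_lt_0_compat; [now apply Dsc_pos|]. pose proof (sinh_pos u Hu'). nra.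
  - intros s Hs. now destruct (u_of_spec s Hs) as [? [? _]].
Qed.

(** * Derivatives of f and j *)

Definition Qsc (u : R) : R := u * (cosh u ^ 2 + sinh u ^ 2) - sinh u * cosh u.

(* At θ = theta_of u, these are f′, f″, f‴, j′ and j″ (Derive_n_fF_1, ...). *)
Definition f1h (u : R) : R := - ln (1 - 4 * / (4 * cosh u ^ 2)).
Definition f2h (u : R) : R := - 2 * sinh u / (cosh u * Dsc u).
Definition f3h (u : R) : R :=
  2 * sinh u ^ 2 * (2 * sinh u ^ 3 * cosh u - Dsc u) / (cosh u ^ 2 * Dsc u ^ 3).
Definition j1h (u : R) : R := - Qsc u * sinh u / (2 * cosh u * Dsc u ^ 2).
Definition j2h (u : R) : R :=
  - / 2 * (4 * u * sinh u ^ 2 / Dsc u ^ 2 + Qsc u / (cosh u ^ 2 * Dsc u ^ 2)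
           - 4 * Qsc u * sinh u ^ 3 / (cosh u * Dsc u ^ 3)) * (sinh u ^ 2 / Dsc u).

Lemma locally_pos t : 0 < t -> locally t (fun y => 0 < y).
Proof.
  intro Ht. exists (mkposreal t Ht). intros y Hy.
  change (Rabs (y - t) < t) in Hy. apply Rabs_def2 in Hy. lra.
Qed.

Lemma one_sub_inv_cosh_sqr_pos u : 0 < u -> 0 < 1 - 4 * / (4 * cosh u ^ 2).
Proof.
  intro Hu. pose proof (cosh_gt_1 u ltac:(lra)).
  rewrite Rinv_mult, <- Rmult_assoc, Rinv_r, Rmult_1_l by lra.
  apply Rlt_0_minus. rewrite <- Rinv_1. apply Rinv_lt_contravar; nra.
Qed.

Lemma is_derive_fF t : 0 < t -> is_derive fF t (f1h (u_of t)).
Proof.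
  intro Ht.
  assert (Hloc : locally t (fun y =>
    ln (4 * cosh (u_of y) ^ 2) - 2 * y - y * ln (1 - 4 * / (4 * cosh (u_of y) ^ 2)) = fF y)).
  { apply filter_imp with (2 := locally_pos t Ht). intros y Hy.
    unfold fF. rewrite (proj2 (proj2 (u_of_spec y Hy))).
    pose proof (cosh_ge_1 (u_of y)). rewrite ln_Rinv by nra. ring. }
  apply (is_derive_ext_loc _ _ _ _ Hloc).
  destruct (u_of_spec t Ht) as [Hu [Hth _]].
  pose proof (is_derive_u_of t Ht) as HU.
  set (u := u_of t) in *.
  pose proof (one_sub_inv_cosh_sqr_pos _ Hu) as Hpos. simpl in Hpos.
  pose proof (cosh_gt_1 u ltac:(lra)). pose proof (sinh_pos u Hu).
  pose proof (Dsc_pos u Hu). pose proof (cosh_sqr_sub_sinh_sqr u).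
  auto_derive; fold u.
  - repeat split; try (eexists; eauto; fail); nra.
  - replace (Derive (fun x => u_of x) t) with (sinh u ^ 2 / Dsc u)
      by (symmetry; now apply is_derive_unique).
    replace (ln (1 + - (4 * / (4 * (cosh u * (cosh u * 1))))))
      with (ln (1 - 4 * / (4 * cosh u ^ 2))) by (f_equal; simpl; ring).
    rewrite <- Hth. unfold f1h, theta_of, Dsc in *.
    field_simplify_eq; [hyp_ring u | repeat split; nra].
Qed.

Lemma is_derive_comp_u_of (F G : R -> R) t : 0 < t ->
  (forall u, 0 < u -> is_derive F u (G u * (Dsc u / sinh u ^ 2))) ->
  is_derive (fun y => F (u_of y)) t (G (u_of t)).
Proof.
  intros Ht HF. destruct (u_of_spec t Ht) as [Hu _].
  pose proof (sinh_pos _ Hu). pose proof (Dsc_pos _ Hu).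
  replace (G (u_of t)) with
    (G (u_of t) * (Dsc (u_of t) / sinh (u_of t) ^ 2) * (sinh (u_of t) ^ 2 / Dsc (u_of t)))
    by (field; split; nra).
  rewrite Rmult_comm. exact (is_derive_comp F u_of t _ _ (HF _ Hu) (is_derive_u_of t Ht)).
Qed.

Lemma is_derive_f1h u : 0 < u -> is_derive f1h u (f2h u * (Dsc u / sinh u ^ 2)).
Proof.
  intro Hu. pose proof (one_sub_inv_cosh_sqr_pos u Hu). simpl in H.
  pose proof (cosh_gt_1 u ltac:(lra)). pose proof (sinh_pos u Hu).
  pose proof (Dsc_pos u Hu). pose proof (cosh_sqr_sub_sinh_sqr u).
  unfold f1h, f2h. auto_derive.
  - repeat split; nra.
  - field_simplify_eq; [hyp_ring u | repeat split; nra].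
Qed.

Lemma is_derive_f2h u : 0 < u -> is_derive f2h u (f3h u * (Dsc u / sinh u ^ 2)).
Proof.
  intro Hu. pose proof (cosh_gt_1 u ltac:(lra)). pose proof (sinh_pos u Hu).
  pose proof (Dsc_pos u Hu). pose proof (cosh_sqr_sub_sinh_sqr u).
  unfold f2h, f3h, Dsc in *. auto_derive.
  - repeat split; nra.
  - field_simplify_eq; [hyp_ring u | repeat split; nra].
Qed.

Lemma is_derive_jF t : 0 < t -> is_derive jF t (j1h (u_of t)).
Proof.
  intro Ht.
  assert (Hloc : locally t (fun y =>
    - / 2 * ln (1 - 4 * (y + 1) * / (4 * cosh (u_of y) ^ 2)) + / 2 * ln 2 = jF y)).
  { apply filter_imp with (2 := locally_pos t Ht). intros y Hy.
    unfold jF. now rewrite (proj2 (proj2 (u_of_spec y Hy))). }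
  apply (is_derive_ext_loc _ _ _ _ Hloc).
  destruct (u_of_spec t Ht) as [Hu [Hth _]].
  pose proof (is_derive_u_of t Ht) as HU.
  set (u := u_of t) in *.
  pose proof (cosh_gt_1 u ltac:(lra)). pose proof (sinh_pos u Hu).
  pose proof (Dsc_pos u Hu). pose proof (cosh_sqr_sub_sinh_sqr u).
  assert (Hpos : 0 < 1 - 4 * (t + 1) * / (4 * cosh u ^ 2)).
  { replace (1 - 4 * (t + 1) * / (4 * cosh u ^ 2)) with (Dsc u / (sinh u * cosh u))
      by (rewrite <- Hth; unfold theta_of, Dsc; field; split; lra).
    apply Rdiv_lt_0_compat; nra. }
  auto_derive; fold u.
  - repeat split; try (eexists; eauto; fail); simpl in Hpos; nra.
  - replace (Derive (fun x => u_of x) t) with (sinh u ^ 2 / Dsc u)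
      by (symmetry; now apply is_derive_unique).
    rewrite <- Hth. unfold theta_of, j1h, Qsc, Dsc in *.
    field_simplify_eq; [hyp_ring u | repeat split; nra].
Qed.

Lemma is_derive_j1h u : 0 < u -> is_derive j1h u (j2h u * (Dsc u / sinh u ^ 2)).
Proof.
  intro Hu. pose proof (cosh_gt_1 u ltac:(lra)). pose proof (sinh_pos u Hu).
  pose proof (Dsc_pos u Hu). pose proof (cosh_sqr_sub_sinh_sqr u).
  unfold j1h, j2h, Qsc, Dsc in *. auto_derive.
  - repeat split; pos_neq0.
  - field_simplify_eq; [hyp_ring u | repeat split; nra].
Qed.

Lemma is_derive_Derive_n_comp_u_of (f F G : R -> R) k t : 0 < t ->
  (forall y, 0 < y -> Derive_n f k y = F (u_of y)) ->
  (forall u, 0 < u -> is_derive F u (G u * (Dsc u / sinh u ^ 2))) ->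
  is_derive (Derive_n f k) t (G (u_of t)).
Proof.
  intros Ht Hk HF. apply (is_derive_ext_loc (fun y => F (u_of y))).
  - apply filter_imp with (2 := locally_pos t Ht). intros y Hy. symmetry. now apply Hk.
  - now apply is_derive_comp_u_of.
Qed.

Lemma Derive_n_fF_1 t : 0 < t -> Derive_n fF 1 t = f1h (u_of t).
Proof. intro Ht. now apply is_derive_unique, is_derive_fF. Qed.

Lemma Derive_n_fF_2 t : 0 < t -> Derive_n fF 2 t = f2h (u_of t).
Proof.
  intro Ht. apply is_derive_unique.
  exact (is_derive_Derive_n_comp_u_of fF f1h f2h 1 t Ht Derive_n_fF_1 is_derive_f1h).
Qed.

Lemma Derive_n_fF_3 t : 0 < t -> Derive_n fF 3 t = f3h (u_of t).
Proof.
  intro Ht. apply is_derive_unique.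
  exact (is_derive_Derive_n_comp_u_of fF f2h f3h 2 t Ht Derive_n_fF_2 is_derive_f2h).
Qed.

Lemma ex_derive_n_fF k t : (k <= 3)%nat -> 0 < t -> ex_derive_n fF k t.
Proof.
  intros Hk Ht. destruct k as [|[|[|[|k]]]]; [exact I | | | | lia]; eexists.
  - now apply is_derive_fF.
  - exact (is_derive_Derive_n_comp_u_of fF f1h f2h 1 t Ht Derive_n_fF_1 is_derive_f1h).
  - exact (is_derive_Derive_n_comp_u_of fF f2h f3h 2 t Ht Derive_n_fF_2 is_derive_f2h).
Qed.

Lemma Derive_n_jF_1 t : 0 < t -> Derive_n jF 1 t = j1h (u_of t).
Proof. intro Ht. now apply is_derive_unique, is_derive_jF. Qed.

Lemma Derive_n_jF_2 t : 0 < t -> Derive_n jF 2 t = j2h (u_of t).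
Proof.
  intro Ht. apply is_derive_unique.
  exact (is_derive_Derive_n_comp_u_of jF j1h j2h 1 t Ht Derive_n_jF_1 is_derive_j1h).
Qed.

Lemma ex_derive_n_jF k t : (k <= 2)%nat -> 0 < t -> ex_derive_n jF k t.
Proof.
  intros Hk Ht. destruct k as [|[|[|k]]]; [exact I | | | lia]; eexists.
  - now apply is_derive_jF.
  - exact (is_derive_Derive_n_comp_u_of jF j1h j2h 1 t Ht Derive_n_jF_1 is_derive_j1h).
Qed.

(** * Bounds on the derivatives *)

Lemma Qsc_pos u : 0 < u -> 0 < Qsc u.
Proof.
  intro Hu. unfold Qsc.
  apply (pos_of_is_derive_from_0 (fun y => y * (cosh y ^ 2 + sinh y ^ 2) - sinh y * cosh y)
                                 (fun y => 4 * y * sinh y * cosh y) u Hu).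
  - rewrite sinh_0, cosh_0. ring.
  - intros x _. auto_derive; auto. field_simplify_eq. hyp_ring x.
  - intros x [Hx|<-]; [|rewrite sinh_0; lra].
    pose proof (sinh_pos x Hx). pose proof (cosh_ge_1 x). apply Rlt_le. positivity.
  - intros x Hx. pose proof (sinh_pos x Hx). pose proof (cosh_ge_1 x). positivity.
Qed.

Section HyperbolicBounds.

Variable u : R.
Hypothesis u_pos : 0 < u.

Let s := sinh u.
Let c := cosh u.
Let D := Dsc u.
Let P := u * cosh u - sinh u.

Let u_lt_s : u < s. Proof. now apply sinh_gt_id. Qed.
Let c_gt_1 : 1 < c. Proof. apply cosh_gt_1; lra. Qed.
Let c_sqr_sub_s_sqr : c ^ 2 - s ^ 2 = 1. Proof. apply cosh_sqr_sub_sinh_sqr. Qed.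
Let P_pos : 0 < P. Proof. pose proof (sinh_lt_id_mul_cosh u u_pos). unfold P. lra. Qed.
Let P_le_D : P <= D. Proof. unfold P, D, Dsc. fold s c. nra. Qed.
Let P_le_sc : P <= s * c. Proof. unfold P. fold s c. nra. Qed.
Let theta_eq : theta_of u = P / s. Proof. now apply theta_of_eq. Qed.

Lemma sinh_cube_le : s ^ 3 <= 2 * c * D.
Proof.
  unfold D, Dsc. fold s c.
  assert (s * (c ^ 2 + 1) >= 2 * u * c) by (assert (c ^ 2 + 1 >= 2 * c) by nra; nra).
  nra.
Qed.

Lemma id_mul_sinh_sqr_le : u * s ^ 2 <= 2 * (u + 1) * D.
Proof.
  pose proof sinh_cube_le. pose proof (theta_of_le_id u u_pos) as Hth.
  rewrite theta_eq in Hth. apply Rle_div_l in Hth; [|lra].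
  assert (u * s ^ 2 * s <= 2 * (u + 1) * D * s); [|nra].
  unfold P in Hth. fold s c in Hth. nra.
Qed.

Lemma Qsc_le : Qsc u <= 2 * u * s ^ 2.
Proof.
  pose proof (id_lt_sinh_mul_cosh u u_pos) as Hsc. unfold Qsc. fold s c in Hsc |- *. nra.
Qed.

Lemma f2h_neg : f2h u < 0.
Proof.
  unfold f2h. fold s c D.
  assert (0 < 2 * s / (c * D)) by (apply Rdiv_lt_0_compat; nra).
  replace (- 2 * s / (c * D)) with (- (2 * s / (c * D))) by (field; split; lra). lra.
Qed.

Lemma j1h_neg : j1h u < 0.
Proof.
  unfold j1h. fold s c D. pose proof (Qsc_pos u u_pos).
  assert (0 < Qsc u * s / (2 * c * D ^ 2)) by (apply Rdiv_lt_0_compat; positivity).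
  replace (- Qsc u * s / (2 * c * D ^ 2)) with (- (Qsc u * s / (2 * c * D ^ 2)))
    by (field; split; lra). lra.
Qed.

Lemma theta_sqr_mul_abs_f2h_le : theta_of u ^ 2 * Rabs (f2h u) <= 2.
Proof.
  rewrite Rabs_left by apply f2h_neg. rewrite theta_eq. unfold f2h. fold s c D.
  replace ((P / s) ^ 2 * - (- 2 * s / (c * D))) with (2 * (P * P) / (s * c * D))
    by (field; repeat split; lra).
  apply Rle_div_l; [positivity|].
  assert (P * P <= D * (s * c)) by (apply Rmult_le_compat; lra). nra.
Qed.

Let ratio_PD : 0 < P / D <= 1.
Proof. split; [positivity | apply Rle_div_l; lra]. Qed.

Lemma theta_sqr_mul_abs_f3h_le : theta_of u ^ 2 * Rabs (f3h u) <= 10.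
Proof.
  pose proof sinh_cube_le.
  assert (Habs : Rabs (2 * s ^ 3 * c - D) <= (4 * c ^ 2 + 1) * D).
  { apply Rabs_le. assert (0 <= s ^ 3 * c) by (apply Rlt_le; positivity). nra. }
  rewrite theta_eq. unfold f3h. fold s c D.
  replace (2 * s ^ 2 * (2 * s ^ 3 * c - D) / (c ^ 2 * D ^ 3))
    with (2 * s ^ 2 / (c ^ 2 * D ^ 3) * (2 * s ^ 3 * c - D)) by (field; split; lra).
  rewrite Rabs_mult, (Rabs_pos_eq (2 * s ^ 2 / (c ^ 2 * D ^ 3))) by (apply Rlt_le; positivity).
  apply Rle_trans with ((P / s) ^ 2 * (2 * s ^ 2 / (c ^ 2 * D ^ 3)) * ((4 * c ^ 2 + 1) * D)).
  { rewrite (Rmult_assoc ((P / s) ^ 2)). apply Rmult_le_compat_l; [apply pow2_ge_0|].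
    apply Rmult_le_compat_l; [apply Rlt_le; positivity | exact Habs]. }
  replace ((P / s) ^ 2 * (2 * s ^ 2 / (c ^ 2 * D ^ 3)) * ((4 * c ^ 2 + 1) * D))
    with (2 * (P / D) ^ 2 * (4 + / c ^ 2)) by (field; repeat split; lra).
  assert (/ c ^ 2 <= 1) by (rewrite <- Rinv_1; apply Rinv_le_contravar; nra).
  assert (0 < / c ^ 2) by positivity.
  nra.
Qed.

Lemma theta_mul_abs_j1h_le : theta_of u * Rabs (j1h u) <= 2 * (u + 1).
Proof.
  pose proof (Qsc_pos u u_pos). pose proof Qsc_le. pose proof id_mul_sinh_sqr_le.
  rewrite Rabs_left by apply j1h_neg. rewrite theta_eq. unfold j1h. fold s c D.
  replace (P / s * - (- Qsc u * s / (2 * c * D ^ 2))) with (P * Qsc u / (2 * c * D ^ 2))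
    by (field; repeat split; lra).
  apply Rle_div_l; [positivity|].
  assert (P * Qsc u <= D * (2 * u * s ^ 2)) by (apply Rmult_le_compat; lra).
  assert (D * (2 * u * s ^ 2) <= D * (4 * (u + 1) * D)) by (apply Rmult_le_compat_l; lra).
  assert (0 < (u + 1) * D ^ 2) by positivity. nra.
Qed.

Lemma theta_sqr_mul_abs_j2h_le : theta_of u ^ 2 * Rabs (j2h u) <= 22 * (u + 1).
Proof.
  pose proof (Qsc_pos u u_pos). pose proof Qsc_le. pose proof id_mul_sinh_sqr_le.
  pose proof sinh_cube_le.
  set (a := u * s ^ 2 / D). set (q := Qsc u / D). set (r := s ^ 3 / (c * D)).
  assert (Ha : 0 <= a <= 2 * (u + 1))
    by (split; [apply Rlt_le; unfold a; positivity | apply Rle_div_l; lra]).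
  assert (Hq : 0 < q <= 4 * (u + 1)) by (split; [unfold q; positivity | apply Rle_div_l; lra]).
  assert (Hr : 0 < r <= 2) by (split; [unfold r; positivity | apply Rle_div_l; nra]).
  assert (Hqc : 0 < q / c ^ 2 <= q)
    by (split; [positivity | apply Rle_div_l; nra]).
  replace (theta_of u ^ 2 * Rabs (j2h u))
    with (/ 2 * (P / D) ^ 2 * Rabs (4 * a + q / c ^ 2 - 4 * q * r)).
  2:{ rewrite theta_eq, <- (Rabs_pos_eq ((P / s) ^ 2)) by apply pow2_ge_0.
      rewrite <- (Rabs_pos_eq (/ 2 * (P / D) ^ 2)) by (apply Rlt_le; positivity).
      rewrite <- !Rabs_mult. rewrite <- Rabs_Ropp. f_equal.
      unfold j2h, a, q, r. fold s c D. field. repeat split; lra. }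
  assert (Rabs (4 * a + q / c ^ 2 - 4 * q * r) <= 44 * (u + 1)) by (apply Rabs_le; nra).
  assert (0 < (P / D) ^ 2 <= 1) by (split; [positivity | nra]).
  assert (0 <= Rabs (4 * a + q / c ^ 2 - 4 * q * r)) by apply Rabs_pos.
  nra.
Qed.

Lemma inv_4_cosh_sqr_le : / (4 * c ^ 2) <= exp (- (2 * u)).
Proof.
  rewrite exp_Ropp. apply Rinv_le_contravar; [apply exp_pos|].
  replace (2 * u) with (u + u) by ring. rewrite exp_plus.
  assert (exp u <= 2 * c) by (unfold c, cosh; pose proof (exp_pos (- u)); lra).
  pose proof (exp_pos u). nra.
Qed.

End HyperbolicBounds.

Lemma lam_pos t : 0 < t -> 0 < lam t.
Proof.
  intro Ht. destruct (u_of_spec t Ht) as [_ [_ ->]].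
  pose proof (cosh_ge_1 (u_of t)). positivity.
Qed.

Lemma lam_mul_pow4_le t : 0 < t -> lam t * (1 + t) ^ 4 <= 16.
Proof.
  intro Ht. destruct (u_of_spec t Ht) as [Hu [Hth ->]].
  pose proof (inv_4_cosh_sqr_le (u_of t)). pose proof (one_add_pow4_mul_exp_le (u_of t) ltac:(lra)).
  pose proof (theta_of_le_id _ Hu). rewrite Hth in *.
  assert ((1 + t) ^ 4 <= (1 + u_of t) ^ 4) by (apply pow_incr; lra).
  assert (0 < / (4 * cosh (u_of t) ^ 2)) by (pose proof (cosh_ge_1 (u_of t)); positivity).
  assert (0 <= (1 + t) ^ 4) by (apply pow_le; lra).
  pose proof (exp_pos (- (2 * u_of t))). nra.
Qed.

Lemma Derive_fF_tangent t : 0 < t -> t * Derive_n fF 1 t - fF t - 2 * t = ln (lam t).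
Proof.
  intro Ht. rewrite Derive_n_fF_1 by auto. unfold f1h, fF.
  rewrite (proj2 (proj2 (u_of_spec t Ht))). ring.
Qed.

Lemma theta_sqr_mul_abs_Derive_n_fF_2_le t : 0 < t -> t ^ 2 * Rabs (Derive_n fF 2 t) <= 2.
Proof.
  intro Ht. destruct (u_of_spec t Ht) as [Hu [Hth _]].
  rewrite Derive_n_fF_2, <- Hth at 1 by auto. now apply theta_sqr_mul_abs_f2h_le.
Qed.

Lemma theta_mul_abs_Derive_n_jF_1_le t : 0 < t -> t * Rabs (Derive_n jF 1 t) <= 2 * t + 4.
Proof.
  intro Ht. destruct (u_of_spec t Ht) as [Hu [Hth _]].
  pose proof (theta_of_ge_id_sub_1 _ Hu). pose proof (theta_mul_abs_j1h_le _ Hu).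
  rewrite Derive_n_jF_1 by auto. rewrite Hth in *. lra.
Qed.

Lemma sqr_mul_abs_Derive_n_fF_3_le t s : 0 < t <= s -> t ^ 2 * Rabs (Derive_n fF 3 s) <= 10.
Proof.
  intro Hts. destruct (u_of_spec s ltac:(lra)) as [Hu [Hth _]].
  pose proof (theta_sqr_mul_abs_f3h_le _ Hu). rewrite Hth in H.
  rewrite Derive_n_fF_3 by lra.
  assert (t ^ 2 <= s ^ 2) by (apply pow_incr; lra).
  pose proof (Rabs_pos (f3h (u_of s))). nra.
Qed.

Lemma sqr_mul_abs_Derive_n_jF_2_le t s : 0 < t <= s -> s <= 2 * t ->
  t ^ 2 * Rabs (Derive_n jF 2 s) <= 44 * (t + 1).
Proof.
  intros Hts Hst. destruct (u_of_spec s ltac:(lra)) as [Hu [Hth _]].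
  pose proof (theta_sqr_mul_abs_j2h_le _ Hu). pose proof (theta_of_ge_id_sub_1 _ Hu).
  rewrite Hth in *. rewrite Derive_n_jF_2 by lra.
  assert (t ^ 2 <= s ^ 2) by (apply pow_incr; lra).
  pose proof (Rabs_pos (j2h (u_of s))). nra.
Qed.

Lemma Derive_n_fF_2_nonpos t : 0 < t -> Derive_n fF 2 t <= 0.
Proof. intro Ht. rewrite Derive_n_fF_2 by auto. apply Rlt_le, f2h_neg, u_of_spec, Ht. Qed.

Lemma Derive_n_jF_1_nonpos t : 0 < t -> Derive_n jF 1 t <= 0.
Proof. intro Ht. rewrite Derive_n_jF_1 by auto. apply Rlt_le, j1h_neg, u_of_spec, Ht. Qed.

(** * Expansion of α *)

Lemma Omega_ratio n g : (2 <= n)%nat -> (1 <= g)%nat ->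
  Omega (n - 1) g / Omega n g =
  exp ((2 * INR g - 2) * ln ((INR n - 1) / INR n)
       + ((INR n - 1) * fF (INR g / (INR n - 1)) + jF (INR g / (INR n - 1)))
       - (INR n * fF (INR g / INR n) + jF (INR g / INR n))).
Proof.
  intros Hn Hg.
  assert (HN : 2 <= INR n) by (apply (le_INR 2); auto).
  assert (HG : 1 <= INR g) by (apply (le_INR 1); auto).
  unfold Omega.
  set (K := sqrt (INR g) * INR g ^ g
            / (sqrt (2 * PI) * exp (INR g) * INR (Factorial.fact g))).
  assert (HK : 0 < K).
  { unfold K. apply Rdiv_lt_0_compat.
    - apply Rmult_lt_0_compat; [apply sqrt_lt_R0 | apply pow_lt]; lra.
    - repeat apply Rmult_lt_0_compat.
      + apply sqrt_lt_R0. pose proof PI_RGT_0. lra.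
      + apply exp_pos.
      + apply lt_0_INR, Factorial.lt_O_fact. }
  rewrite minus_INR by lia. replace (INR 1) with 1 by reflexivity.
  rewrite <- (Rpower_pow _ (INR n - 1)), <- (Rpower_pow _ (INR n)) by lra. unfold Rpower.
  rewrite minus_INR, mult_INR by lia. replace (INR 2) with 2 by (simpl; ring).
  rewrite ln_div by lra.
  set (k := 2 * INR g - 2).
  set (a1 := (INR n - 1) * fF (INR g / (INR n - 1)) + jF (INR g / (INR n - 1))).
  set (a0 := INR n * fF (INR g / INR n) + jF (INR g / INR n)).
  replace (k * (ln (INR n - 1) - ln (INR n)) + a1 - a0)
    with (k * ln (INR n - 1) + a1 + - (k * ln (INR n)) + - a0) by ring.
  rewrite !exp_plus, !exp_Ropp.
  pose proof (exp_pos (k * ln (INR n))). pose proof (exp_pos a0).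
  field. repeat split; lra.
Qed.

Lemma Taylor_Lagrange_1 f x y : x < y ->
  (forall t, x <= t <= y -> forall k, (k <= 1)%nat -> ex_derive_n f k t) ->
  exists z, x < z < y /\ f y = f x + (y - x) * Derive_n f 1 z.
Proof.
  intros Hxy Hd. destruct (Taylor_Lagrange f 0 x y Hxy Hd) as [z [Hz E]].
  exists z. split; auto. rewrite E. simpl. field.
Qed.

Lemma Taylor_Lagrange_2 f x y : x < y ->
  (forall t, x <= t <= y -> forall k, (k <= 2)%nat -> ex_derive_n f k t) ->
  exists z, x < z < y /\
    f y = f x + (y - x) * Derive_n f 1 x + (y - x) ^ 2 / 2 * Derive_n f 2 z.
Proof.
  intros Hxy Hd. destruct (Taylor_Lagrange f 1 x y Hxy Hd) as [z [Hz E]].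
  exists z. split; auto. rewrite E. simpl. field.
Qed.

Lemma Taylor_Lagrange_3 f x y : x < y ->
  (forall t, x <= t <= y -> forall k, (k <= 3)%nat -> ex_derive_n f k t) ->
  exists z, x < z < y /\
    f y = f x + (y - x) * Derive_n f 1 x + (y - x) ^ 2 / 2 * Derive_n f 2 x
          + (y - x) ^ 3 / 6 * Derive_n f 3 z.
Proof.
  intros Hxy Hd. destruct (Taylor_Lagrange f 2 x y Hxy Hd) as [z [Hz E]].
  exists z. split; auto. rewrite E. simpl. field.
Qed.

(* Abstract data for the expansion of α at t = g/n, with N = n and
   g/(n − 1) = t + t/(N − 1): ft1 = f(g/(n−1)), jt1 = j(g/(n−1)), l = ln(1 − 1/N),
   and F2z, F3z, J1z, J2z are derivatives of f and j at the intermediate points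
   of the Lagrange remainders. *)
Section Assembly.

Variables N t lam0 f f1 f2 j j1 l ft1 jt1 F2z F3z J1z J2z : R.

Hypothesis N_ge_2 : 2 <= N.
Hypothesis t_pos : 0 < t.
Hypothesis tN_ge_1 : 1 <= t * N.
Hypothesis lam0_pos : 0 < lam0.
Hypothesis lam0_mul_pow4_le : lam0 * (1 + t) ^ 4 <= 16.
Hypothesis l_ge : - / N - (/ N) ^ 2 / 2 - (/ N) ^ 3 <= l.
Hypothesis l_le : l <= - / N - (/ N) ^ 2 / 2.
Hypothesis f_tangent : t * f1 - f - 2 * t = ln lam0.
Hypothesis f2_bound : t ^ 2 * Rabs f2 <= 2.
Hypothesis j1_bound : t * Rabs j1 <= 2 * t + 4.
Hypothesis F3z_bound : t ^ 2 * Rabs F3z <= 10.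
Hypothesis J2z_bound : t ^ 2 * Rabs J2z <= 44 * (t + 1).
Hypothesis F2z_nonpos : F2z <= 0.
Hypothesis J1z_nonpos : J1z <= 0.
Hypothesis f_taylor3 :
  ft1 = f + t / (N - 1) * f1 + (t / (N - 1)) ^ 2 / 2 * f2 + (t / (N - 1)) ^ 3 / 6 * F3z.
Hypothesis f_taylor2 : ft1 = f + t / (N - 1) * f1 + (t / (N - 1)) ^ 2 / 2 * F2z.
Hypothesis j_taylor2 : jt1 = j + t / (N - 1) * j1 + (t / (N - 1)) ^ 2 / 2 * J2z.
Hypothesis j_taylor1 : jt1 = j + t / (N - 1) * J1z.

Let y := / N.
Let w := / (N - 1).
Let k := 2 * (t * N) - 2.
Let z := k * l + ((N - 1) * ft1 + jt1) - (N * f + j) - ln lam0.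
Let B := t ^ 2 * f2 / 2 - t + 2 + t * j1.

Let y_bounds : 0 < y <= 1 / 2.
Proof.
  unfold y. split; [positivity|].
  apply (Rmult_le_reg_r N); [lra|]. rewrite Rinv_l by lra. lra.
Qed.
Let N_mul_y : N * y = 1. Proof. unfold y. field. lra. Qed.
Let w_bounds : 0 < w <= 2 * y.
Proof.
  unfold w, y. split; [positivity|].
  apply (Rmult_le_reg_r (N * (N - 1))); [nra|].
  replace (/ (N - 1) * (N * (N - 1))) with N by (field; lra).
  replace (2 * / N * (N * (N - 1))) with (2 * (N - 1)) by (field; lra). lra.
Qed.
Let k_nonneg : 0 <= k. Proof. unfold k. lra. Qed.

Let first_order_coeff_bound : Rabs (t ^ 2 * f2 / 2 + t * j1) <= 2 * t + 5.
Proof.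
  eapply Rle_trans; [apply Rabs_triang|]. unfold Rdiv.
  rewrite !Rabs_mult, Rabs_inv, (Rabs_pos_eq t), (Rabs_pos_eq (t ^ 2)), (Rabs_pos_eq 2)
    by (apply Rlt_le; positivity).
  lra.
Qed.

Lemma exponent_expansion : Rabs (z - B * y) <= 140 * (1 + t) * y ^ 2.
Proof.
  set (r := - l - y - y ^ 2 / 2).
  assert (Hr : 0 <= r <= y ^ 3) by (unfold r, y in *; lra).
  (* T1 comes from ln(1 − 1/N), T2 from 1/(N − 1) − 1/N, T3 and T4 from the
     Taylor remainders of f and j. *)
  set (T1 := y ^ 2 - k * r).
  set (T2 := (t ^ 2 * f2 / 2 + t * j1) * (y * w)).
  set (T3 := t ^ 2 * F3z * (t * w ^ 2 / 6)).
  set (T4 := t ^ 2 * J2z * (w ^ 2 / 2)).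
  assert (E : z - B * y = T1 + T2 + T3 + T4).
  { unfold z, B, T1, T2, T3, T4, r, k, w, y. rewrite f_taylor3, j_taylor2, <- f_tangent.
    field. lra. }
  assert (Hy2 : 0 < y ^ 2) by positivity.
  assert (B1 : Rabs T1 <= (1 + 2 * t) * y ^ 2).
  { assert (k * r <= 2 * t * y ^ 2).
    { apply Rle_trans with (2 * (t * N) * y ^ 3); [apply Rmult_le_compat; unfold k in *; lra|].
      replace (2 * (t * N) * y ^ 3) with (2 * t * (N * y) * y ^ 2) by ring. rewrite N_mul_y. lra. }
    assert (0 <= k * r) by (apply Rmult_le_pos; lra).
    apply Rabs_le. unfold T1. nra. }
  assert (B2 : Rabs T2 <= 2 * (2 * t + 5) * y ^ 2).
  { pose proof first_order_coeff_bound.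
    unfold T2. rewrite Rabs_mult, (Rabs_pos_eq (y * w)) by (apply Rlt_le; positivity).
    apply Rle_trans with ((2 * t + 5) * (y * w));
      [apply Rmult_le_compat_r; [apply Rlt_le; positivity | lra]|].
    assert (y * w <= y * (2 * y)) by (apply Rmult_le_compat_l; lra).
    replace (2 * (2 * t + 5) * y ^ 2) with ((2 * t + 5) * (y * (2 * y))) by ring.
    apply Rmult_le_compat_l; lra. }
  assert (B3 : Rabs T3 <= 7 * t * y ^ 2).
  { unfold T3. rewrite Rabs_mult, (Rabs_pos_eq (t * w ^ 2 / 6)) by (apply Rlt_le; positivity).
    rewrite Rabs_mult, (Rabs_pos_eq (t ^ 2)) by (apply Rlt_le; positivity).
    apply Rle_trans with (10 * (t * w ^ 2 / 6));
      [apply Rmult_le_compat_r; [apply Rlt_le; positivity | lra]|].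
    assert (w ^ 2 <= 4 * y ^ 2) by nra. nra. }
  assert (B4 : Rabs T4 <= 88 * (t + 1) * y ^ 2).
  { unfold T4. rewrite Rabs_mult, (Rabs_pos_eq (w ^ 2 / 2)) by (apply Rlt_le; positivity).
    rewrite Rabs_mult, (Rabs_pos_eq (t ^ 2)) by (apply Rlt_le; positivity).
    apply Rle_trans with (44 * (t + 1) * (w ^ 2 / 2));
      [apply Rmult_le_compat_r; [apply Rlt_le; positivity | lra]|].
    assert (w ^ 2 <= 4 * y ^ 2) by nra. nra. }
  rewrite E. eapply Rle_trans; [apply Rabs_triang4|]. nra.
Qed.

Lemma exponent_le_2 : z <= 2.
Proof.
  assert (E : z = k * l + 2 * t + t * (t * w) / 2 * F2z + t * w * J1z).
  { unfold z, k, w. rewrite f_taylor2, j_taylor1, <- f_tangent. field. lra. }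
  assert (t * (t * w) / 2 * F2z <= 0).
  { assert (0 < t * (t * w) / 2) by positivity. nra. }
  assert (t * w * J1z <= 0) by (assert (0 < t * w) by positivity; nra).
  assert (k * l <= k * (- y - y ^ 2 / 2)) by (apply Rmult_le_compat_l; unfold y; lra).
  assert (k * (- y - y ^ 2 / 2) + 2 * t = y * (2 - t + y) - (N * y - 1) * (2 * t + t * y))
    by (unfold k; field).
  rewrite N_mul_y in H2.
  assert (0 <= t * y) by (apply Rlt_le; positivity).
  nra.
Qed.

Lemma abs_exponent_le : Rabs z <= 80 * (1 + t) * y.
Proof.
  pose proof exponent_expansion.
  assert (HB : Rabs B <= 3 * t + 7).
  { unfold B.
    replace (t ^ 2 * f2 / 2 - t + 2 + t * j1) with (t ^ 2 * f2 / 2 + t * j1 + (2 - t)) by ring.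
    eapply Rle_trans; [apply Rabs_triang|].
    pose proof first_order_coeff_bound.
    assert (Rabs (2 - t) <= 2 + t) by (apply Rabs_le; lra). lra. }
  replace z with (B * y + (z - B * y)) by ring.
  eapply Rle_trans; [apply Rabs_triang|]. rewrite Rabs_mult, (Rabs_pos_eq y) by lra.
  assert (Rabs B * y <= (3 * t + 7) * y) by (apply Rmult_le_compat_r; lra).
  assert (140 * (1 + t) * y ^ 2 <= 70 * (1 + t) * y)
    by (assert (0 < (1 + t) * y) by positivity; nra).
  nra.
Qed.

Lemma exp_exponent_expansion :
  Rabs (2 * (2 * N - 1) / (N + 1) * exp z - 4 - 4 / N * (/ 2 - t + t ^ 2 / 2 * f2 + t * j1))
  <= 226000 * ((1 + t) ^ 2 * y ^ 2).
Proof.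
  pose proof exponent_expansion as HE. pose proof abs_exponent_le as Hz.
  set (rho := exp z - 1 - z).
  assert (Hrho : Rabs rho <= 5 * z ^ 2) by (apply exp_sub_1_sub_le, exponent_le_2).
  set (v := / (N + 1)).
  assert (Hv : 0 < v <= y) by (split; [unfold v; positivity | apply Rinv_le_contravar; lra]).
  (* 2(2N − 1)/(N + 1) = 4 − 6v and y − v = y v. *)
  replace (2 * (2 * N - 1) / (N + 1) * exp z - 4 - 4 / N * (/ 2 - t + t ^ 2 / 2 * f2 + t * j1))
    with (4 * (z - B * y) + 4 * rho + 6 * y * v + - (6 * v * (z + rho)))
    by (unfold rho, B, v, y; field; lra).
  eapply Rle_trans; [apply Rabs_triang4|].
  rewrite Rabs_Ropp, !Rabs_mult, (Rabs_pos_eq 4), (Rabs_pos_eq 6), (Rabs_pos_eq y), (Rabs_pos_eq v)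
    by lra.
  assert (Hz2 : z ^ 2 <= 6400 * ((1 + t) ^ 2 * y ^ 2)).
  { rewrite <- (pow2_abs z).
    replace (6400 * ((1 + t) ^ 2 * y ^ 2)) with ((80 * (1 + t) * y) ^ 2) by ring.
    apply pow_incr. split; [apply Rabs_pos | exact Hz]. }
  assert (v * Rabs (z + rho) <= v * Rabs z + v * Rabs rho)
    by (rewrite <- Rmult_plus_distr_l; apply Rmult_le_compat_l; [lra | apply Rabs_triang]).
  assert (v * Rabs z <= y * (80 * (1 + t) * y))
    by (apply Rmult_le_compat; try lra; apply Rabs_pos).
  assert (v * Rabs rho <= / 2 * (5 * z ^ 2)) by (apply Rmult_le_compat; try lra; apply Rabs_pos).
  assert (1 + t <= (1 + t) ^ 2) by nra.
  assert (0 < y ^ 2) by positivity.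
  assert (y * v <= (1 + t) ^ 2 * y ^ 2) by nra.
  assert ((1 + t) * y ^ 2 <= (1 + t) ^ 2 * y ^ 2) by nra.
  nra.
Qed.

Lemma alpha_expansion_error :
  Rabs (2 * (2 * N - 1) / (N + 1)
          * exp ((2 * (t * N) - 2) * l + ((N - 1) * ft1 + jt1) - (N * f + j))
        - 4 * lam0 - 4 * lam0 / N * (/ 2 - t + t ^ 2 / 2 * f2 + t * j1))
  <= 4000000 / (N ^ 2 * (1 + t) ^ 2).
Proof.
  replace ((2 * (t * N) - 2) * l + ((N - 1) * ft1 + jt1) - (N * f + j)) with (z + ln lam0)
    by (unfold z, k; ring).
  rewrite exp_plus, exp_ln by lra.
  replace (2 * (2 * N - 1) / (N + 1) * (exp z * lam0) - 4 * lam0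
           - 4 * lam0 / N * (/ 2 - t + t ^ 2 / 2 * f2 + t * j1))
    with (lam0 * (2 * (2 * N - 1) / (N + 1) * exp z - 4
                  - 4 / N * (/ 2 - t + t ^ 2 / 2 * f2 + t * j1)))
    by (field; lra).
  rewrite Rabs_mult, (Rabs_pos_eq lam0) by lra.
  eapply Rle_trans; [apply Rmult_le_compat_l; [lra | apply exp_exponent_expansion]|].
  assert (lam0 * (1 + t) ^ 2 <= 16 / (1 + t) ^ 2).
  { apply (Rmult_le_reg_r ((1 + t) ^ 2)); [positivity|].
    unfold Rdiv. rewrite (Rmult_assoc 16), Rinv_l by pos_neq0.
    replace (lam0 * (1 + t) ^ 2 * (1 + t) ^ 2) with (lam0 * (1 + t) ^ 4) by ring. lra. }
  replace (lam0 * (226000 * ((1 + t) ^ 2 * y ^ 2)))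
    with (226000 * (lam0 * (1 + t) ^ 2) * y ^ 2) by ring.
  apply Rle_trans with (226000 * (16 / (1 + t) ^ 2) * y ^ 2).
  { apply Rmult_le_compat_r; [apply pow2_ge_0 | lra]. }
  replace (226000 * (16 / (1 + t) ^ 2) * y ^ 2) with (3616000 / (N ^ 2 * (1 + t) ^ 2))
    by (unfold y; field; lra).
  apply Rmult_le_compat_r; [apply Rlt_le; positivity | lra].
Qed.

End Assembly.

Lemma alpha_sub_expansion_le n g : (2 <= n)%nat -> (1 <= g)%nat ->
  let th := INR g / INR n in
  Rabs (alpha n g - 4 * lam th
        - 4 * lam th / INR n
          * (/ 2 - th + th ^ 2 / 2 * Derive_n fF 2 th + th * Derive jF th))
  <= 4000000 / (INR n ^ 2 * (1 + th) ^ 2).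
Proof.
  intros Hn Hg th.
  assert (HN : 2 <= INR n) by (apply (le_INR 2); auto).
  assert (HG : 1 <= INR g) by (apply (le_INR 1); auto).
  assert (Ht : 0 < th) by (unfold th; apply Rdiv_lt_0_compat; lra).
  assert (Hgt : INR g = th * INR n) by (unfold th; field; lra).
  set (t1 := INR g / (INR n - 1)).
  assert (Hstep : t1 - th = th / (INR n - 1)) by (unfold t1, th; field; lra).
  assert (Ht1 : th < t1 <= 2 * th).
  { assert (th / (INR n - 1) <= th) by (apply Rle_div_l; nra).
    assert (0 < th / (INR n - 1)) by positivity. lra. }
  destruct (Taylor_Lagrange_3 fF th t1) as [z1 [Hz1 Ef3]];
    [lra | intros s Hs k Hk; apply ex_derive_n_fF; [lia | lra] |].
  destruct (Taylor_Lagrange_2 fF th t1) as [z2 [Hz2 Ef2]];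
    [lra | intros s Hs k Hk; apply ex_derive_n_fF; [lia | lra] |].
  destruct (Taylor_Lagrange_2 jF th t1) as [z3 [Hz3 Ej2]];
    [lra | intros s Hs k Hk; apply ex_derive_n_jF; [lia | lra] |].
  destruct (Taylor_Lagrange_1 jF th t1) as [z4 [Hz4 Ej1]];
    [lra | intros s Hs k Hk; apply ex_derive_n_jF; [lia | lra] |].
  rewrite Hstep in Ef3, Ef2, Ej2, Ej1.
  unfold alpha. rewrite Omega_ratio by auto. fold th t1. rewrite Hgt.
  apply alpha_expansion_error with (f1 := Derive_n fF 1 th)
    (F2z := Derive_n fF 2 z2) (F3z := Derive_n fF 3 z1)
    (J1z := Derive_n jF 1 z4) (J2z := Derive_n jF 2 z3);
    auto using lam_pos, lam_mul_pow4_le, Derive_fF_tangent,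
      theta_sqr_mul_abs_Derive_n_fF_2_le, theta_mul_abs_Derive_n_jF_1_le.
  - lra.
  - apply ln_sub_1_div_bounds; lra.
  - apply ln_sub_1_div_bounds; lra.
  - apply sqr_mul_abs_Derive_n_fF_3_le; lra.
  - apply sqr_mul_abs_Derive_n_jF_2_le; lra.
  - apply Derive_n_fF_2_nonpos; lra.
  - apply Derive_n_jF_1_nonpos; lra.
Qed.

Theorem lemma4 :
  exists C : R, 0 < C /\
  forall n g : nat, (2 <= n)%nat -> (1 <= g)%nat ->
    let th := INR g / INR n in
    let x := INR n + INR g in
    Rpower x (- (2 / 3)) <= th ->
    Rabs (alpha n g - 4 * lam th
          - 4 * lam th / INR n
            * (/ 2 - th + th ^ 2 / 2 * Derive_n fF 2 th + th * Derive jF th))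
    <= C / x ^ 2.
Proof.
  exists 4000000. split; [lra|].
  intros n g Hn Hg th x _.
  assert (HN : 2 <= INR n) by (apply (le_INR 2); auto).
  replace (x ^ 2) with (INR n ^ 2 * (1 + th) ^ 2) by (unfold x, th; field; lra).
  exact (alpha_sub_expansion_le n g Hn Hg).
Qed.
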